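(* Fix a policy $\pi$ with information set $\mathcal{I}$ in a finite-horizon POMDP $\mathcal{M}$ with $S$ states and $O$ observations, and let beliefs be computed as described in the context. For each state trajectory $\tau_{\mathcal{S}}$ with $p^\pi(\tau_{\mathcal{S}})>0$ define $$\mathbb{P}(\mathcal{T}_{\mathcal{O}}\mid\tau_{\mathcal{S}})=\sum_{\tau_{\mathcal{O}}:\,H(d(\tau_{\mathcal{O}}))\ge H(d(\tau_{\mathcal{S}}))}p^\pi(\tau_{\mathcal{O}}\mid\tau_{\mathcal{S}}),\qquad J^{\mathcal{O}}(\pi\mid\tau_{\mathcal{S}})=\mathbb{E}_{\tau_{\mathcal{O}}\sim p^\pi(\cdot\mid\tau_{\mathcal{S}})}[H(d(\tau_{\mathcal{O}}))],$$ $$\bar p_{\mathcal{S}}(\tau_{\mathcal{S}})=\mathbb{E}_{\tau_{\mathcal{B}}\sim p^\pi(\cdot\mid\tau_{\mathcal{S}})}\Big[\sum_{\tau_{\tilde{\mathcal{S}}}:\,H(d(\tau_{\tilde{\mathcal{S}}}))\ge H(d(\tau_{\mathcal{S}}))}\ \prod_{t=1}^T\bm{b}_t(\tilde s_t)\Big],\qquad \tilde J(\pi\mid\tau_{\mathcal{S}})=\mathbb{E}_{\tau_{\mathcal{B}}\sim p^\pi(\cdot\mid\tau_{\mathcal{S}})}\mathbb{E}_{\tau_{\tilde{\mathcal{S}}}\sim p(\cdot\mid\tau_{\mathcal{B}})}[H(d(\tau_{\tilde{\mathcal{S}}}))].$$ Assume $0<\mathbb{P}(\mathcal{T}_{\mathcal{O}}\mid\tau_{\mathcal{S}})<1$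 and $0<\bar p_{\mathcal{S}}(\tau_{\mathcal{S}})<1$ for all such $\tau_{\mathcal{S}}$. Then, with $J^{\mathcal{S}}(\pi)=\mathbb{E}_{\tau_{\mathcal{S}}\sim p^\pi}[H(d(\tau_{\mathcal{S}}))]$, $$\mathbb{E}_{\tau_{\mathcal{S}}\sim p^\pi}\Big[\frac{J^{\mathcal{O}}(\pi\mid\tau_{\mathcal{S}})-\mathbb{P}(\mathcal{T}_{\mathcal{O}}\mid\tau_{\mathcal{S}})\log O}{1-\mathbb{P}(\mathcal{T}_{\mathcal{O}}\mid\tau_{\mathcal{S}})}\Big]\le J^{\mathcal{S}}(\pi)\le\mathbb{E}_{\tau_{\mathcal{S}}\sim p^\pi}\Big[\frac{J^{\mathcal{O}}(\pi\mid\tau_{\mathcal{S}})}{\mathbb{P}(\mathcal{T}_{\mathcal{O}}\mid\tau_{\mathcal{S}})}\Big],$$ and $$\mathbb{E}_{\tau_{\mathcal{S}}\sim p^\pi}\Big[\frac{\tilde J(\pi\mid\tau_{\mathcal{S}})-\bar p_{\mathcal{S}}(\tau_{\mathcal{S}})\log S}{1-\bar p_{\mathcal{S}}(\tau_{\mathcal{S}})}\Big]\le J^{\mathcal{S}}(\pi)\le\mathbb{E}_{\tau_{\mathcal{S}}\sim p^\pi}\Big[\frac{\tilde J(\pi\mid\tau_{\mathcal{S}})}{\bar p_{\mathcal{S}}(\tau_{\mathcal{S}})}\Big].$$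
   Context: A finite-horizon POMDP $\mathcal{M}=(\mathcal{S},\mathcal{A},\mathcal{O},\mathbb{P},\mathbb{O},T,\mu)$ has finite state set ($S=|\mathcal{S}|$), action set, observation set ($O=|\mathcal{O}|$), transition kernel $\mathbb{P}$, observation kernel $\mathbb{O}$, horizon $T$, initial distribution $\mu$. Under a policy $\pi:\mathcal{I}\to\Delta(\mathcal{A})$: $s_1\sim\mu$, $o_t\sim\mathbb{O}(\cdot\mid s_t)$, and for $t<T$, $a_t\sim\pi(\cdot\mid i_t)$, $s_{t+1}\sim\mathbb{P}(\cdot\mid s_t,a_t)$, with $i_t$ a deterministic function of $(o_1,a_1,\dots,a_{t-1},o_t)$. Beliefs $\bm{b}_t\in\Delta(\mathcal{S})$ are deterministic functions of $(o_1,a_1,\dots,a_{t-1},o_t)$ (exact or approximate Bayesian beliefs), $\tau_{\mathcal{B}}=(\bm{b}_1,\dots,\bm{b}_T)$. $p^\pi$ is the law of the joint trajectory (state trajectory $\tau_{\mathcal{S}}=(s_1,\dots,s_T)$, observation trajectory $\tau_{\mathcal{O}}=(o_1,\dots,o_T)$, actions, beliefs), and $p^\pi(\cdot\mid\tau_{\mathcal{S}})$ denotes conditional laws given the state trajectory. A believed trajectory $\tau_{\tilde{\mathcal{S}}}=(\tilde s_1,\dots,\tilde s_T)\in\mathcal{S}^T$ is drawn given $\tau_{\mathcal{B}}$ with probability $p(\tau_{\tilde{\mathcal{S}}}\mid\tau_{\mathcal{B}})=\prod_t\bm{b}_t(\tilde s_t)$. For a sequence $x=(x_1,\dots,x_T)$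 over a finite set, $d(x)$ is its empirical distribution $d_y(x)=\frac1T\sum_t\mathbf{1}\{x_t=y\}$ and $H$ is Shannon entropy (natural log). *)

From HB Require Import structures.
From mathcomp Require Import all_boot all_order all_algebra.
From mathcomp Require Import reals exp.
Set Implicit Arguments. Unset Strict Implicit. Unset Printing Implicit Defensive.
Import Order.TTheory GRing.Theory Num.Theory.
Local Open Scope ring_scope.

Definition isdist (R : realType) (X : finType) (p : {ffun X -> R}) : Prop :=
  (forall x, 0 <= p x) /\ \sum_x p x = 1.

Definition entropy (R : realType) (X : finType) (p : X -> R) : R :=
  - \sum_(y : X) (if p y == 0 then 0 else p y * ln (p y)).

Section POMDP.
Variable R : realType.
Variables (S A Obs : finType) (I : Type).
(* horizon T = n.+1; times are indexed 0..n (paper: 1..T) *)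
Variable n : nat.
Local Notation T := n.+1.
Variable mu : {ffun S -> R}.
Variable Ptr : S -> A -> {ffun S -> R}.
Variable Ob : S -> {ffun Obs -> R}.
Variable info : seq Obs -> seq A -> I.       (* i_t = info (o_1..o_t) (a_1..a_{t-1}) *)
Variable pi : I -> {ffun A -> R}.
Variable bel : seq Obs -> seq A -> {ffun S -> R}. (* b_t = bel (o_1..o_t) (a_1..a_{t-1}) *)

Definition empirical (X : finType) (x : {ffun 'I_T -> X}) (y : X) : R :=
  #|[set t | x t == y]|%:R / T%:R.

Definition Hd (X : finType) (x : {ffun 'I_T -> X}) : R := entropy (empirical x).

Definition sidx (j : 'I_n) : 'I_T := widen_ord (leqnSn n) j.
Definition snext (j : 'I_n) : 'I_T := lift ord0 j.

Definition obs_hist (o : {ffun 'I_T -> Obs}) (t : nat) : seq Obs :=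
  take t.+1 [seq o i | i <- enum 'I_T].
Definition act_hist (a : {ffun 'I_n -> A}) (t : nat) : seq A :=
  take t [seq a j | j <- enum 'I_n].

Definition joint (s : {ffun 'I_T -> S}) (o : {ffun 'I_T -> Obs})
    (a : {ffun 'I_n -> A}) : R :=
  mu (s ord0) * (\prod_(t < T) Ob (s t) (o t)) *
  \prod_(j < n) (pi (info (obs_hist o j) (act_hist a j)) (a j)
                 * Ptr (s (sidx j)) (a j) (s (snext j))).

Definition pS (s : {ffun 'I_T -> S}) : R := \sum_o \sum_a joint s o a.

Definition pO_given (s : {ffun 'I_T -> S}) (o : {ffun 'I_T -> Obs}) : R :=
  (\sum_a joint s o a) / pS s.

Definition PT (s : {ffun 'I_T -> S}) : R :=
  \sum_(o | Hd s <= Hd o) pO_given s o.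

Definition JO (s : {ffun 'I_T -> S}) : R :=
  \sum_o pO_given s o * Hd o.

Definition belief_at (o : {ffun 'I_T -> Obs}) (a : {ffun 'I_n -> A})
    (t : 'I_T) : {ffun S -> R} := bel (obs_hist o t) (act_hist a t).

Definition believed_prob (o : {ffun 'I_T -> Obs}) (a : {ffun 'I_n -> A})
    (st : {ffun 'I_T -> S}) : R := \prod_(t < T) belief_at o a t (st t).

Definition pbar (s : {ffun 'I_T -> S}) : R :=
  \sum_o \sum_a (joint s o a / pS s) *
     \sum_(st | Hd s <= Hd st) believed_prob o a st.

Definition Jtilde (s : {ffun 'I_T -> S}) : R :=
  \sum_o \sum_a (joint s o a / pS s) *
     \sum_st believed_prob o a st * Hd st.

Definition JS : R := \sum_s pS s * Hd s.

End POMDP.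

From HB Require Import structures.
From mathcomp Require Import all_boot all_order all_algebra.
From mathcomp Require Import reals exp lra.
Set Implicit Arguments. Unset Strict Implicit. Unset Printing Implicit Defensive.
Import Order.TTheory GRing.Theory Num.Theory.
Local Open Scope ring_scope.

(* Fix a state trajectory with c := H(d(tau_S)). Every trajectory x over an
   alphabet of size K has 0 <= H(d(x)) <= ln K, so splitting a conditional
   expectation J of H(d(.)) at the threshold c gives
   P c <= J <= P ln K + (1 - P) c, where P is the conditional probability of
   the event H(d(.)) >= c. Solving for c yields the per-trajectory bounds,
   which are then averaged against p^pi(tau_S). For believed trajectories,
   J and P are averages over belief trajectories of such pairs, and the
   two-sided inequality survives averaging since it is linear in (P, J). *)

Section Entropy.
Variables (R : realType) (X : finType) (p : X -> R).
Hypotheses (p_ge0 : forall x, 0 <= p x) (sum_p : \sum_x p x = 1).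

Lemma entropy_ge0 : 0 <= entropy p.
Proof.
rewrite /entropy oppr_ge0 sumr_le0 // => x _.
case: ifP => // _; rewrite mulr_ge0_le0 // ln_le0 //.
by rewrite -sum_p (bigD1 x) //= lerDl sumr_ge0.
Qed.

Lemma entropy_le_ln_card : entropy p <= ln #|X|%:R.
Proof.
set k : R := #|X|%:R.
have k_gt0 : 0 < k.
  rewrite ltr0n lt0n; apply/negP => /eqP/card0_eq X0.
  by move: sum_p; rewrite big_pred0 // => /eqP; rewrite eq_sym oner_eq0.
(* Gibbs: ln z <= z - 1 at z = 1 / (k p x) *)
have term_le x : - (if p x == 0 then 0 else p x * ln (p x)) <= p x * ln k + k^-1 - p x.
  case: eqP => [->|/eqP px0]; first by rewrite oppr0 mul0r add0r addr0 invr_ge0 ltW.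
  have px_gt0 : 0 < p x by rewrite lt0r px0 p_ge0.
  have kp_gt0 : 0 < k * p x by rewrite mulr_gt0.
  have := @le_ln1Dx R ((k * p x)^-1 - 1).
  rewrite (addrC 1) subrK lnV ?posrE // lnM ?posrE //.
  have -> : -1 < (k * p x)^-1 - 1 by have := invr_gt0 (k * p x); rewrite kp_gt0; lra.
  move=> /(_ isT) /(ler_wpM2l (ltW px_gt0)).
  have -> : p x * ((k * p x)^-1 - 1) = k^-1 - p x.
    by rewrite mulrBr mulr1 invfM mulrC -mulrA mulVf ?mulr1 // gt_eqF.
  lra.
rewrite /entropy -sumrN; apply: le_trans (ler_sum _ (fun x _ => term_le x)) _.
rewrite sumrB big_split /= -mulr_suml sum_p mul1r sumr_const.
rewrite -mulr_natl -/k mulfV ?gt_eqF //; lra.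
Qed.

End Entropy.

Section EmpiricalEntropy.
Variables (R : realType) (n : nat) (X : finType) (x : {ffun 'I_n.+1 -> X}).

Lemma empirical_ge0 y : 0 <= empirical R x y.
Proof. by rewrite /empirical divr_ge0. Qed.

Lemma sum_empirical : \sum_y empirical R x y = 1.
Proof.
rewrite /empirical -mulr_suml -natr_sum.
have -> : (\sum_y #|[set t | x t == y]|)%N = n.+1.
  rewrite -[RHS]card_ord -sum1_card (partition_big x predT) //=.
  by apply: eq_bigr => y _; rewrite -sum1_card; apply: eq_bigl => t; rewrite inE.
by rewrite mulfV // pnatr_eq0.
Qed.

Lemma Hd_ge0 : 0 <= Hd R x.
Proof. exact: entropy_ge0 empirical_ge0 sum_empirical. Qed.

Lemma Hd_le_ln_card : Hd R x <= ln #|X|%:R.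
Proof. exact: entropy_le_ln_card empirical_ge0 sum_empirical. Qed.

End EmpiricalEntropy.

Definition threshold_sandwich {R : numDomainType} (c L P J : R) : bool :=
  P * c <= J <= P * L + (1 - P) * c.

Lemma mean_threshold_sandwich (R : realDomainType) (U : finType) (q h : U -> R) (c L : R) :
  (forall u, 0 <= q u) -> \sum_u q u = 1 -> (forall u, 0 <= h u <= L) ->
  threshold_sandwich c L (\sum_(u | c <= h u) q u) (\sum_u q u * h u).
Proof.
move=> q_ge0 sum_q h_bound; rewrite /threshold_sandwich.
have -> : 1 - \sum_(u | c <= h u) q u = \sum_(u | ~~ (c <= h u)) q u.
  by rewrite -sum_q (bigID (fun u => c <= h u)) /= addrC addrK.
rewrite (bigID (fun u => c <= h u) predT) /= !mulr_suml.
apply/andP; split.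
  rewrite -[leLHS]addr0; apply: lerD; first by apply: ler_sum => u hu; apply: ler_wpM2l.
  by apply: sumr_ge0 => u _; rewrite mulr_ge0 //; case/andP: (h_bound u).
apply: lerD; apply: ler_sum => u hu; apply: ler_wpM2l => //.
  by case/andP: (h_bound u).
by rewrite ltW // ltNge.
Qed.

Lemma threshold_sandwich_mix (R : realDomainType) (U : finType) (w P J : U -> R) (c L : R) :
  (forall u, 0 <= w u) -> \sum_u w u = 1 ->
  (forall u, threshold_sandwich c L (P u) (J u)) ->
  threshold_sandwich c L (\sum_u w u * P u) (\sum_u w u * J u).
Proof.
move=> w_ge0 sum_w PJ; apply/andP; split.
  rewrite mulr_suml; apply: ler_sum => u _; rewrite -mulrA ler_wpM2l //.
  by case/andP: (PJ u).
apply: le_trans (_ : \sum_u w u * (P u * L + (1 - P u) * c) <= _).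
  by apply: ler_sum => u _; rewrite ler_wpM2l //; case/andP: (PJ u).
have -> : \sum_u w u * (P u * L + (1 - P u) * c) =
          \sum_u (w u * P u * (L - c) + w u * c).
  by apply: eq_bigr => u _; lra.
by rewrite big_split /= -!mulr_suml sum_w; lra.
Qed.

Lemma threshold_sandwich_bounds (R : realFieldType) (c L P J : R) :
  0 < P < 1 -> threshold_sandwich c L P J -> (J - P * L) / (1 - P) <= c <= J / P.
Proof.
move=> /andP[P_gt0 P_lt1] /andP[lo hi].
by rewrite ler_pdivrMr ?subr_gt0 // ler_pdivlMr //; apply/andP; split; lra.
Qed.

Section POMDPBounds.
Variables (R : realType) (S A Obs : finType) (I : Type) (n : nat).
Variables (mu : {ffun S -> R}) (Ptr : S -> A -> {ffun S -> R})
  (Ob : S -> {ffun Obs -> R}) (info : seq Obs -> seq A -> I)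
  (pi : I -> {ffun A -> R}) (bel : seq Obs -> seq A -> {ffun S -> R}).
Hypotheses (mu_dist : isdist mu) (Ptr_dist : forall s a, isdist (Ptr s a))
  (Ob_dist : forall s, isdist (Ob s)) (pi_dist : forall i, isdist (pi i))
  (bel_dist : forall os as_, isdist (bel os as_)).

Lemma joint_ge0 s o a : 0 <= joint mu Ptr Ob info pi (n := n) s o a.
Proof.
rewrite /joint !mulr_ge0 //; first by case: mu_dist.
- by apply: prodr_ge0 => t _; case: (Ob_dist (s t)).
- apply: prodr_ge0 => j _; rewrite mulr_ge0 //.
    by case: (pi_dist (info (obs_hist o j) (act_hist a j))).
  by case: (Ptr_dist (s (sidx j)) (a j)).
Qed.

Lemma pS_ge0 (s : {ffun 'I_n.+1 -> S}) : 0 <= pS mu Ptr Ob info pi s.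
Proof. by apply: sumr_ge0 => o _; apply: sumr_ge0 => a _; apply: joint_ge0. Qed.

Lemma believed_prob_ge0 o a st : 0 <= believed_prob bel (n := n) o a st.
Proof.
apply: prodr_ge0 => t _.
by case: (bel_dist (obs_hist o t) (act_hist a t)).
Qed.

Lemma sum_believed_prob o a : \sum_st believed_prob bel (n := n) o a st = 1.
Proof.
rewrite /believed_prob -(bigA_distr_bigA (fun t x => belief_at bel o a t x)).
by rewrite big1 // => t _; case: (bel_dist (obs_hist o t) (act_hist a t)).
Qed.

Lemma JS_restrict :
  JS n mu Ptr Ob info pi =
    \sum_(s : {ffun 'I_n.+1 -> S} | 0 < pS mu Ptr Ob info pi s)
      pS mu Ptr Ob info pi s * Hd R s.
Proof.
rewrite /JS (bigID (fun s => 0 < pS mu Ptr Ob info pi s)) /=.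
rewrite [X in _ + X]big1 ?addr0 // => s; rewrite -leNgt => pS_le0.
by rewrite (@le_anti _ _ (pS _ _ _ _ _ s) 0) ?mul0r // pS_le0 pS_ge0.
Qed.

Variable s : {ffun 'I_n.+1 -> S}.
Hypothesis pS_gt0 : 0 < pS mu Ptr Ob info pi s.

Lemma JO_sandwich :
  threshold_sandwich (Hd R s) (ln #|Obs|%:R)
    (PT mu Ptr Ob info pi s) (JO mu Ptr Ob info pi s).
Proof.
apply: mean_threshold_sandwich => [o||o]; last by rewrite Hd_ge0 Hd_le_ln_card.
  by rewrite /pO_given divr_ge0 ?pS_ge0 // sumr_ge0 // => a _; apply: joint_ge0.
by rewrite /pO_given -mulr_suml mulfV // gt_eqF.
Qed.

Lemma Jtilde_sandwich :
  threshold_sandwich (Hd R s) (ln #|S|%:R)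
    (pbar mu Ptr Ob info pi bel s) (Jtilde mu Ptr Ob info pi bel s).
Proof.
rewrite /pbar /Jtilde !pair_bigA /=.
apply: threshold_sandwich_mix => [oa||oa].
- by rewrite divr_ge0 ?pS_ge0 ?joint_ge0.
- rewrite -(pair_bigA _ (fun o a => joint mu Ptr Ob info pi s o a / _)) /=.
  by under eq_bigr do rewrite -mulr_suml; rewrite -mulr_suml mulfV // gt_eqF.
apply: mean_threshold_sandwich => [st||st]; last by rewrite Hd_ge0 Hd_le_ln_card.
  exact: believed_prob_ge0.
exact: sum_believed_prob.
Qed.

End POMDPBounds.

Theorem theorem4 (R : realType) (S A Obs : finType) (I : Type) (n : nat)
    (mu : {ffun S -> R}) (Ptr : S -> A -> {ffun S -> R})
    (Ob : S -> {ffun Obs -> R}) (info : seq Obs -> seq A -> I)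
    (pi : I -> {ffun A -> R}) (bel : seq Obs -> seq A -> {ffun S -> R}) :
  isdist mu ->
  (forall s a, isdist (Ptr s a)) ->
  (forall s, isdist (Ob s)) ->
  (forall i, isdist (pi i)) ->
  (forall os as_, isdist (bel os as_)) ->
  (forall s : {ffun 'I_n.+1 -> S},
     0 < @pS R S A Obs I n mu Ptr Ob info pi s ->
     (0 < @PT R S A Obs I n mu Ptr Ob info pi s < 1) /\ (0 < @pbar R S A Obs I n mu Ptr Ob info pi bel s < 1)) ->
  let pS := @pS R S A Obs I n mu Ptr Ob info pi in
  let PT := @PT R S A Obs I n mu Ptr Ob info pi in
  let JO := @JO R S A Obs I n mu Ptr Ob info pi in
  let pbar := @pbar R S A Obs I n mu Ptr Ob info pi bel in
  let Jt := @Jtilde R S A Obs I n mu Ptr Ob info pi bel in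
  let JS := @JS R S A Obs I n mu Ptr Ob info pi in
  ((\sum_(s | 0 < pS s) pS s * ((JO s - PT s * ln #|Obs|%:R) / (1 - PT s))
      <= JS)
   /\ (JS <= \sum_(s | 0 < pS s) pS s * (JO s / PT s)))
  /\
  ((\sum_(s | 0 < pS s) pS s * ((Jt s - pbar s * ln #|S|%:R) / (1 - pbar s))
      <= JS)
   /\ (JS <= \sum_(s | 0 < pS s) pS s * (Jt s / pbar s))).
Proof.
move=> mu_d Ptr_d Ob_d pi_d bel_d P_in01 pS' PT' JO' pbar' Jt' JS'.
have pS_ge0' := pS_ge0 info mu_d Ptr_d Ob_d pi_d.
rewrite /JS' (JS_restrict n info mu_d Ptr_d Ob_d pi_d).
have bounds_O s (hs : 0 < pS' s) :=
  threshold_sandwich_bounds (proj1 (P_in01 s hs)) (JO_sandwich mu_d Ptr_d Ob_d pi_d hs).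
have bounds_B s (hs : 0 < pS' s) :=
  threshold_sandwich_bounds (proj2 (P_in01 s hs))
    (Jtilde_sandwich mu_d Ptr_d Ob_d pi_d bel_d hs).
split; split; apply: ler_sum => s hs; rewrite ler_wpM2l ?pS_ge0' //.
- by case/andP: (bounds_O s hs).
- by case/andP: (bounds_O s hs).
- by case/andP: (bounds_B s hs).
- by case/andP: (bounds_B s hs).
Qed.
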